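(* Let $G=(V,E)$ be a simple graph with $|V|=n$, adjacency matrix $A$, and $D$ the diagonal matrix of vertex degrees. Then $$\alpha(G)=\max\{\mathbf{e}^\top x \mid x\in\{0,1\}^n,\ 0\leq (A+I)x-\mathbf{e}\leq (D-I)(\mathbf{e}-x)\},$$ where $I$ is the $n\times n$ identity and $\mathbf{e}$ the all-ones vector.
   Context: $\alpha(G)$ is the maximum cardinality of an independent set of $G$. Vector inequalities are componentwise. *)

From HB Require Import structures.
From mathcomp Require Import all_boot all_order all_algebra.
Set Implicit Arguments. Unset Strict Implicit. Unset Printing Implicit Defensive.
Import Order.TTheory GRing.Theory Num.Theory.
Local Open Scope ring_scope.

Definition simple_graph (n : nat) (g : rel 'I_n) : Prop :=
  symmetric g /\ irreflexive g.

Definition independent (n : nat) (g : rel 'I_n) (S : {set 'I_n}) : bool :=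
  [forall x in S, forall y in S, ~~ g x y].

Definition alpha (n : nat) (g : rel 'I_n) : nat :=
  (\max_(S : {set 'I_n} | independent g S) #|S|)%N.

Definition adjmx (n : nat) (g : rel 'I_n) : 'M[int]_n :=
  \matrix_(i, j) (g i j)%:R.

Definition degmx (n : nat) (g : rel 'I_n) : 'M[int]_n :=
  diag_mx (\row_i (#|[set j | g i j]|)%:R).

Definition onesv (n : nat) : 'cV[int]_n := const_mx 1.

Definition vec01 (n : nat) (x : {ffun 'I_n -> bool}) : 'cV[int]_n :=
  \col_i (x i)%:R.

Definition mxle (m k : nat) (A B : 'M[int]_(m, k)) : bool :=
  [forall i, forall j, A i j <= B i j].

Definition feasible (n : nat) (g : rel 'I_n) (x : {ffun 'I_n -> bool}) : bool :=
  mxle 0 ((adjmx g + 1%:M) *m vec01 x - onesv n) &&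
  mxle ((adjmx g + 1%:M) *m vec01 x - onesv n)
       ((degmx g - 1%:M) *m (onesv n - vec01 x)).

Definition eTx (n : nat) (x : {ffun 'I_n -> bool}) : int :=
  ((onesv n)^T *m vec01 x) 0 0.

From mathcomp Require Import all_boot all_order all_algebra zify.
Set Implicit Arguments. Unset Strict Implicit. Unset Printing Implicit Defensive.
Import Order.TTheory GRing.Theory Num.Theory.
Local Open Scope ring_scope.

(** Row [i] of the system reads [0 <= c + x_i - 1 <= (d - 1)(1 - x_i)], where
   [d] is the degree of [i] and [c] the number of its neighbours selected by
   [x].  For [x_i = 1] this forces [c = 0], for [x_i = 0] it forces [c >= 1]
   (the upper bound [c <= d] being automatic).  So the feasible points are
   exactly the independent dominating sets, i.e. the maximal independent
   sets; every maximum independent set is maximal, hence the maximum of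
   [e^T x] over them is [alpha(G)]. *)

Definition dominating (n : nat) (g : rel 'I_n) (S : {set 'I_n}) : bool :=
  [forall i in ~: S, exists j in S, g i j].

Lemma sumr_indicator (T : finType) (P : pred T) :
  \sum_j ((P j)%:R : int) = #|[set j | P j]|%:R.
Proof.
rewrite (bigID P) /= [X in _ + X]big1 ?addr0; last by move=> j /negbTE ->.
by rewrite (eq_bigr (fun _ => 1)) ?sumr_const ?cardsE // => j ->.
Qed.

Lemma row_constraintE (b : bool) (c d : nat) : (c <= d)%N ->
  (0 <= c%:R + b%:R - 1 :> int) && (c%:R + b%:R - 1 <= (d%:R - 1) * (1 - b%:R) :> int)
  = if b then c == 0%N else (0 < c)%N.
Proof. by case: b => cd /=; rewrite ?subrr ?mulr0 ?subr0 ?mulr1; apply/idP/idP; lia. Qed.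

Section Feasibility.

Variables (n : nat) (g : rel 'I_n).

Lemma eTxE (x : {ffun 'I_n -> bool}) : eTx x = #|[set j | x j]|%:R.
Proof. by rewrite /eTx !mxE -sumr_indicator; apply: eq_bigr => j _; rewrite !mxE mul1r. Qed.

Lemma adj_slack_entry (x : {ffun 'I_n -> bool}) i :
  ((adjmx g + 1%:M) *m vec01 x - onesv n) i 0 =
  #|[set j | g i j && x j]|%:R + (x i)%:R - 1.
Proof.
rewrite mulmxDl mul1mx !mxE -sumr_indicator; congr (_ + _ - _).
by apply: eq_bigr => j _; rewrite !mxE; case: (g i j); case: (x j).
Qed.

Lemma deg_slack_entry (x : {ffun 'I_n -> bool}) i :
  ((degmx g - 1%:M) *m (onesv n - vec01 x)) i 0 =
  (#|[set j | g i j]|%:R - 1) * (1 - (x i)%:R).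
Proof. by rewrite mulmxBl mul1mx mul_diag_mx !mxE mulrBl mul1r. Qed.

Lemma neighbours_selected_sub (x : {ffun 'I_n -> bool}) i :
  [set j | g i j && x j] \subset [set j | g i j].
Proof. by apply/subsetP => j; rewrite !inE => /andP[]. Qed.

Lemma feasible_neighbours (x : {ffun 'I_n -> bool}) :
  feasible g x =
  [forall i, if x i then #|[set j | g i j && x j]| == 0%N
             else (0 < #|[set j | g i j && x j]|)%N].
Proof.
have row_feasible i := row_constraintE (x i) (subset_leq_card (neighbours_selected_sub x i)).
rewrite /feasible /mxle; apply/andP/forallP => [[/forallP lo /forallP hi] i | hyp].
  move/forallP/(_ 0): (lo i); move/forallP/(_ 0): (hi i).
  by rewrite adj_slack_entry deg_slack_entry mxE -row_feasible => -> ->.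
split; apply/forallP => i; apply/forallP => j; rewrite (ord1 j);
  by move: (hyp i); rewrite ?adj_slack_entry ?deg_slack_entry ?mxE -row_feasible => /andP[].
Qed.

Lemma feasible_independent_dominating (x : {ffun 'I_n -> bool}) :
  feasible g x = independent g [set j | x j] && dominating g [set j | x j].
Proof.
rewrite feasible_neighbours.
apply/forallP/andP => [hyp | [/forallP indep /forallP dom] i].
  split; apply/forall_inP => i; rewrite !inE => xi; move: (hyp i); rewrite ?xi.
  - rewrite cards_eq0 => /eqP nbrs; apply/forall_inP => j; rewrite inE => xj.
    apply: contraT; rewrite negbK => gij.
    by have := in_set0 j; rewrite -nbrs inE gij xj.
  - rewrite (negbTE xi) => /card_gt0P[j]; rewrite inE => nbr.
    by apply/exists_inP; exists j; rewrite ?inE; case/andP: nbr.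
case: ifP => xi.
  rewrite cards_eq0; apply/eqP/setP => j; rewrite !inE.
  apply/negbTE/andP => -[gij xj].
  by move: (indep i); rewrite inE xi => /forallP /(_ j); rewrite inE xj gij.
move: (dom i); rewrite !inE xi => /existsP[j]; rewrite inE => /andP[xj gij].
by apply/card_gt0P; exists j; rewrite inE gij xj.
Qed.

Lemma independent_card_le_alpha (S : {set 'I_n}) :
  independent g S -> (#|S| <= alpha g)%N.
Proof. exact: (leq_bigmax_cond (F := fun S : {set 'I_n} => #|S|)). Qed.

Hypothesis hg : simple_graph g.

Lemma independentU1 (S : {set 'I_n}) i :
  independent g S -> [forall j in S, ~~ g i j] -> independent g (i |: S).
Proof.
case: hg => gsym girr /forall_inP indep /forall_inP no_nbr.
have nbr j : j \in S -> ~~ g i j && ~~ g j i by move/no_nbr; rewrite gsym andbb.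
apply/forall_inP => a; rewrite in_setU1 => /orP[/eqP -> | aS];
  apply/forall_inP => b; rewrite in_setU1 => /orP[/eqP -> | bS].
- by rewrite girr.
- by case/andP: (nbr b bS).
- by case/andP: (nbr a aS).
- by move/forall_inP: (indep a aS); apply.
Qed.

Lemma maximum_independent_dominating (S : {set 'I_n}) :
  independent g S -> (forall T, independent g T -> #|T| <= #|S|)%N ->
  dominating g S.
Proof.
move=> indep maxS; apply/forall_inP => i; rewrite inE; apply: contraR.
rewrite negb_exists_in => no_nbr.
by have := maxS _ (independentU1 indep no_nbr); rewrite cardsU1; case: (i \in S); rewrite ?ltnn.
Qed.

End Feasibility.

Theorem theorem4 (n : nat) (g : rel 'I_n) (hg : simple_graph g) :
  (exists x : {ffun 'I_n -> bool}, feasible g x /\ eTx x = (alpha g)%:Z) /\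
  (forall x : {ffun 'I_n -> bool}, feasible g x -> eTx x <= (alpha g)%:Z).
Proof.
split; last first.
  move=> x; rewrite feasible_independent_dominating eTxE natz lez_nat.
  by case/andP=> /independent_card_le_alpha.
have nonempty : (0 < #|independent g|)%N.
  by apply/card_gt0P; exists set0; apply/forall_inP => i; rewrite inE.
have [S indep alphaE] := eq_bigmax_cond (fun S : {set 'I_n} => #|S|) nonempty.
have {}alphaE : alpha g = #|S| := alphaE.
have setS : [set j | [ffun i => i \in S] j] = S by apply/setP => i; rewrite inE ffunE.
exists [ffun i => i \in S]; rewrite feasible_independent_dominating eTxE setS alphaE natz.
split=> //; apply/andP; split=> //; apply: maximum_independent_dominating => // T.
by rewrite -alphaE; apply: independent_card_le_alpha.
Qed.
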